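(* Let $q=2^h$. In ${\rm PG}(4,q)$ with homogeneous coordinates $(X_1,\dots,X_5)$ let $\ell$ be the line $X_1=X_4=X_5=0$, $\Sigma$ the solid $X_1=0$, and $\mathcal H$ the hyperbolic quadric of $\Sigma$ with equation $X_2X_5+X_3X_4=0$. Let $\mathcal W(3,q)$ be the symplectic polar space of $\Sigma$ whose lines are the lines of $\Sigma$ totally isotropic for $B(x,y)=x_2y_5+x_5y_2+x_3y_4+x_4y_3$, and let $\mathcal T$ be the set of lines of $\mathcal W(3,q)$ having exactly one point in common with $\mathcal H\setminus\ell$. Let $\alpha\in{\rm GF}(q)$ be such that $X^2+X+\alpha$ is irreducible over ${\rm GF}(q)$ and let $G=\{M_{a,b,c,d}: a\in{\rm GF}(q)\setminus\{0\},\ b,c,d\in{\rm GF}(q),\ c^2+cd+\alpha d^2=1\}$, where $$M_{a,b,c,d}=\begin{pmatrix}1&0&0&0&0\\0&ac&\alpha ad&bc&\alpha bd\\0&ad&a(c+d)&bd&b(c+d)\\0&0&0&a^{-1}c&\alpha a^{-1}d\\0&0&0&a^{-1}d&a^{-1}(c+d)\end{pmatrix},$$ acting on points (column vectors) by left multiplication. Then $G$ acts transitively on $\mathcal T$. *)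

(* Vectors of F^5 are row vectors 'rV[F]_5, coordinates X1..X5 are the
   entries 0..4.  Subspaces are row spaces (mxalgebra, %MS).  A line of
   PG(4,q) is a 2-dimensional subspace, given by L : 'M[F]_(2,5) of rank 2.
   The matrix M acts on column vectors x |-> M x; in row form this is
   x^T |-> x^T M^T, so the image of the line L is the row space of L *m M^T. *)
From HB Require Import structures.
From mathcomp Require Import all_boot all_order all_algebra all_field.
Set Implicit Arguments. Unset Strict Implicit. Unset Printing Implicit Defensive.
Import Order.TTheory GRing.Theory.
Local Open Scope ring_scope.

Section PG4.
Variable F : finFieldType.

Definition ell : 'M[F]_(2,5) := \matrix_(i < 2, j < 5) ((j : nat) == i.+1)%:R.

Definition Sigma : 'M[F]_(4,5) := \matrix_(i < 4, j < 5) ((j : nat) == i.+1)%:R.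

Definition c5 (x : 'rV[F]_5) (k : nat) : F := x 0 (inord k).

Definition Qform (x : 'rV[F]_5) : F := c5 x 1 * c5 x 4 + c5 x 2 * c5 x 3.

Definition Bform (x y : 'rV[F]_5) : F :=
  c5 x 1 * c5 y 4 + c5 x 4 * c5 y 1 + c5 x 2 * c5 y 3 + c5 x 3 * c5 y 2.

Definition onH (x : 'rV[F]_5) : Prop :=
  x != 0 /\ (x <= Sigma)%MS /\ Qform x = 0.

Definition is_line (L : 'M[F]_(2,5)) : Prop := \rank L = 2%N.

Definition W_line (L : 'M[F]_(2,5)) : Prop :=
  is_line L /\ (L <= Sigma)%MS /\
  (forall x y : 'rV[F]_5, (x <= L)%MS -> (y <= L)%MS -> Bform x y = 0).

Definition one_point_H_minus_ell (L : 'M[F]_(2,5)) : Prop :=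
  exists x : 'rV[F]_5,
    [/\ (x <= L)%MS, onH x, ~~ (x <= ell)%MS &
        forall y : 'rV[F]_5, (y <= L)%MS -> onH y -> ~~ (y <= ell)%MS ->
          (y == x)%MS].

Definition inT (L : 'M[F]_(2,5)) : Prop :=
  W_line L /\ one_point_H_minus_ell L.

Definition Mabcd (al a b c d : F) : 'M[F]_5 :=
  \matrix_(i < 5, j < 5)
   match (i : nat), (j : nat) with
   | 0, 0 => 1
   | 1, 1 => a * c | 1, 2 => al * a * d | 1, 3 => b * c | 1, 4 => al * b * d
   | 2, 1 => a * d | 2, 2 => a * (c + d) | 2, 3 => b * d | 2, 4 => b * (c + d)
   | 3, 3 => a^-1 * c | 3, 4 => al * a^-1 * d
   | 4, 3 => a^-1 * d | 4, 4 => a^-1 * (c + d)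
   | _, _ => 0
   end.

Definition inG (al : F) (g : 'M[F]_5) : Prop :=
  exists a b c d : F,
    [/\ a != 0, c ^+ 2 + c * d + al * d ^+ 2 = 1 & g = Mabcd al a b c d].

Definition act (g : 'M[F]_5) (L : 'M[F]_(2,5)) : 'M[F]_(2,5) := L *m g^T.

End PG4.

(* Every element of G fixes X1, the quadratic form X2 X5 + X3 X4 (hence B) and the line l,
   so G permutes T.  G is a group, c^2 + cd + al d^2 being the norm form of GF(q^2), so for
   transitivity it suffices to move the line L0 = <e4, e2 + e5> onto any L in T.  Such an L
   meets l trivially, hence has a basis f1 = (0,p,s,1,0), f2 = (0,r,p,0,1) (B(f1,f2) = 0
   forces the repeated entry p), and (r,s) <> (0,0) since otherwise f1 and f2 would be two
   points of H \ l on L.  In characteristic 2 every element is a square: with r = rho^2,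
   s = sg^2 and a^2 = rho^2 + rho sg + al sg^2, which is nonzero because X^2 + X + al is
   irreducible, M_{a, (p + rho sg)/a, rho/a, sg/a} maps L0 onto L. *)

From HB Require Import structures.
From mathcomp Require Import all_boot all_order all_algebra all_field.
From mathcomp Require Import ring.
Set Implicit Arguments. Unset Strict Implicit. Unset Printing Implicit Defensive.
Import GRing.Theory.
Local Open Scope ring_scope.

Lemma pchar2_sqrt (F : finFieldType) : 2%N \in [pchar F] ->
  forall y : F, exists x : F, x ^+ 2 = y.
Proof.
move=> F2 y; have [g _ gK] := injF_bij (fmorph_inj (pFrobenius_aut F2)).
by exists (g y); rewrite -pFrobenius_autE gK.
Qed.

Section QuadraticNorm.
Variables (F : fieldType) (al : F).

(* The norm of c + d w from GF(q^2), for w a root of X^2 + X + al (in characteristic 2). *)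
Definition qnorm (c d : F) : F := c ^+ 2 + c * d + al * d ^+ 2.

Lemma qnorm_eq0 c d : irreducible_poly ('X^2 + 'X + al%:P) ->
  (qnorm c d == 0) = (c == 0) && (d == 0).
Proof.
move=> irr; apply/idP/idP => [/eqP Ncd|/andP[/eqP-> /eqP->]]; last first.
  by apply/eqP; rewrite /qnorm; ring.
have [d0|dn0] := eqVneq d 0.
  have /eqP : c ^+ 2 = 0 by rewrite -Ncd /qnorm d0; ring.
  by rewrite expf_eq0 /= => ->.
have root_cd : root ('X^2 + 'X + al%:P) (c / d).
  have val_cd : ('X^2 + 'X + al%:P).[c / d] = qnorm c d / d ^+ 2.
    by rewrite !hornerE /qnorm; field.
  by rewrite rootE val_cd Ncd mul0r.
have [||/eqp_size] := irredp_XsubCP irr (_ : 'X - (c / d)%:P %| _).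
- by rewrite dvdp_XsubCl.
- by rewrite -size_poly_eq1 size_XsubC.
rewrite size_XsubC -addrA size_polyDl ?size_polyXn // size_polyDl ?size_polyX ?size_polyC //.
by case: (al != 0).
Qed.

Hypothesis F2 : 2%N \in [pchar F].

Lemma qnormM c' d' c d :
  qnorm (c' * c + al * d' * d) (c' * d + d' * c + d' * d) = qnorm c' d' * qnorm c d.
Proof.
(* the signed version holds in any characteristic *)
have E : (c' * c - al * d' * d) ^+ 2 - (c' * c - al * d' * d) * (c' * d + d' * c - d' * d)
    + al * (c' * d + d' * c - d' * d) ^+ 2
  = (c' ^+ 2 - c' * d' + al * d' ^+ 2) * (c ^+ 2 - c * d + al * d ^+ 2) by ring.
by move: E; rewrite !(oppr_pchar2 F2).
Qed.

Lemma qnorm_conj c d : qnorm (c + d) d = qnorm c d.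
Proof.
have E : (c - d) ^+ 2 - (c - d) * (- d) + al * (- d) ^+ 2 = c ^+ 2 - c * d + al * d ^+ 2.
  by ring.
by move: E; rewrite !(oppr_pchar2 F2).
Qed.

End QuadraticNorm.

Section Coordinates.
Variable F : finFieldType.

Definition v5 (x0 x1 x2 x3 x4 : F) : 'rV[F]_5 :=
  \row_(j < 5) [:: x0; x1; x2; x3; x4]`_j.

Lemma c5_v5 x0 x1 x2 x3 x4 k : (k < 5)%N ->
  c5 (v5 x0 x1 x2 x3 x4) k = [:: x0; x1; x2; x3; x4]`_k.
Proof. by move=> k_lt5; rewrite /c5 mxE inordK. Qed.

Lemma c5_ord (x : 'rV[F]_5) (j : 'I_5) : x 0 j = c5 x j.
Proof. by rewrite /c5 inord_val. Qed.

Lemma v5_c5 (x : 'rV[F]_5) : x = v5 (c5 x 0) (c5 x 1) (c5 x 2) (c5 x 3) (c5 x 4).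
Proof. by apply/rowP => -[[|[|[|[|[|j]]]]] //= j_lt5]; rewrite mxE c5_ord. Qed.

Lemma c5_inj (x y : 'rV[F]_5) : (forall k, (k < 5)%N -> c5 x k = c5 y k) -> x = y.
Proof. by move=> exy; rewrite (v5_c5 x) (v5_c5 y) !exy. Qed.

Lemma c5D (x y : 'rV[F]_5) k : c5 (x + y) k = c5 x k + c5 y k.
Proof. by rewrite /c5 mxE. Qed.

Lemma c5Z (x : 'rV[F]_5) t k : c5 (t *: x) k = t * c5 x k.
Proof. by rewrite /c5 mxE. Qed.

Lemma c50 k : c5 (0 : 'rV[F]_5) k = 0.
Proof. by rewrite /c5 mxE. Qed.

Lemma sub_SigmaE (x : 'rV[F]_5) : (x <= Sigma F)%MS = (c5 x 0 == 0).
Proof.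
apply/idP/eqP => [/submxP[D ->]|x0].
  by rewrite /c5 !mxE big1 // => i _; rewrite !mxE inordK //= mulr0.
apply/submxP; exists (\row_(i < 4) c5 x i.+1).
apply/rowP => -[[|[|[|[|[|j]]]]] //= j_lt5];
  by rewrite c5_ord !mxE !big_ord_recl big_ord0 !mxE /= ?x0; ring.
Qed.

Lemma sub_ellE (x : 'rV[F]_5) :
  (x <= ell F)%MS = [&& c5 x 0 == 0, c5 x 3 == 0 & c5 x 4 == 0].
Proof.
apply/idP/and3P => [/submxP[D ->]|[/eqP x0 /eqP x3 /eqP x4]].
  by rewrite /c5 !mxE !big_ord_recl !big_ord0 !mxE !inordK //= !mulr0 !addr0.
apply/submxP; exists (\row_(i < 2) c5 x i.+1).
apply/rowP => -[[|[|[|[|[|j]]]]] //= j_lt5];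
  by rewrite c5_ord !mxE !big_ord_recl big_ord0 !mxE /= ?x0 ?x3 ?x4; ring.
Qed.

Lemma Qform_add (x y : 'rV[F]_5) : Qform (x + y) = Qform x + Qform y + Bform x y.
Proof. by rewrite /Qform /Bform !c5D; ring. Qed.

End Coordinates.

Section LineImage.
Variables (F : finFieldType) (A : 'M[F]_5).
Hypothesis A_unit : A \in unitmx.
Hypothesis QformA : forall x : 'rV[F]_5, Qform (x *m A) = Qform x.
Hypothesis SigmaA : forall x : 'rV[F]_5, (x *m A <= Sigma F)%MS = (x <= Sigma F)%MS.
Hypothesis ellA : forall x : 'rV[F]_5, (x *m A <= ell F)%MS = (x <= ell F)%MS.

Let A_free : row_free A. Proof. by rewrite row_free_unit. Qed.

Lemma BformA (x y : 'rV[F]_5) : Bform (x *m A) (y *m A) = Bform x y.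
Proof.
have := Qform_add (x *m A) (y *m A).
by rewrite -mulmxDl !QformA Qform_add => /addrI.
Qed.

Lemma onH_mulmx (x : 'rV[F]_5) : onH (x *m A) <-> onH x.
Proof. by rewrite /onH mulmx_free_eq0 // SigmaA QformA. Qed.

Lemma inT_mulmx (L : 'M[F]_(2,5)) : inT L -> inT (L *m A).
Proof.
move=> [[rkL [LS BL]] [P [PL HP Pell P_uniq]]].
split; [split; [|split] |].
- by rewrite /is_line mxrankMfree.
- by apply/row_subP => i; rewrite row_mul SigmaA (submx_trans (row_sub i L)).
- move=> _ _ /submxP[Dx ->] /submxP[Dy ->].
  by rewrite !mulmxA BformA; apply: BL; apply: submxMl.
exists (P *m A); split; rewrite ?submxMr ?onH_mulmx ?ellA //.
move=> y; rewrite -[y](mulmxKV A_unit) submxMfree // onH_mulmx ellA.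
by move=> yL yH yell; apply/eqmxP/eqmxMr/eqmxP/P_uniq.
Qed.

End LineImage.

Section GroupG.
Variables (F : finFieldType) (al : F).
Hypothesis F2 : 2%N \in [pchar F].
Let two0 : 2%:R = 0 :> F. Proof. exact: pcharf0 F2. Qed.

Lemma mul_Mabcd_tr (x : 'rV[F]_5) a b c d :
  x *m (Mabcd al a b c d)^T =
  v5 (c5 x 0)
     (a * c * c5 x 1 + al * a * d * c5 x 2 + b * c * c5 x 3 + al * b * d * c5 x 4)
     (a * d * c5 x 1 + a * (c + d) * c5 x 2 + b * d * c5 x 3 + b * (c + d) * c5 x 4)
     (a^-1 * c * c5 x 3 + al * a^-1 * d * c5 x 4)
     (a^-1 * d * c5 x 3 + a^-1 * (c + d) * c5 x 4).
Proof.
rewrite {1}(v5_c5 x); apply/rowP => -[[|[|[|[|[|j]]]]] //= j_lt5];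
  by rewrite !mxE !big_ord_recl big_ord0 !mxE /=; ring.
Qed.

Lemma Mabcd_mul a' b' c' d' a b c d : a' != 0 -> a != 0 ->
  Mabcd al a' b' c' d' *m Mabcd al a b c d =
  Mabcd al (a' * a) (a' * b + b' / a) (c' * c + al * d' * d) (c' * d + d' * c + d' * d).
Proof.
move=> a'_neq0 a_neq0; apply/matrixP => i j.
rewrite !mxE !big_ord_recl big_ord0 !mxE /=.
case: i => [[|[|[|[|[|i]]]]] //= i_lt5]; case: j => [[|[|[|[|[|j]]]]] //= j_lt5];
  by field: two0; rewrite ?a_neq0 ?a'_neq0.
Qed.

Lemma Mabcd1 : Mabcd al 1 0 1 0 = 1%:M.
Proof.
apply/matrixP => -[[|[|[|[|[|i]]]]] //= i_lt5] [[|[|[|[|[|j]]]]] //= j_lt5];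
  by rewrite !mxE ?invr1 /=; ring.
Qed.

Lemma inG_mul (g g' : 'M[F]_5) : inG al g -> inG al g' -> inG al (g *m g').
Proof.
move=> [a [b [c [d [a_neq0 Ncd ->]]]]] [a' [b' [c' [d' [a'_neq0 Ncd' ->]]]]].
rewrite Mabcd_mul //; do 4 eexists; split; last reflexivity.
  by rewrite mulf_neq0.
by rewrite -/(qnorm _ _ _) qnormM // /qnorm Ncd Ncd' mulr1.
Qed.

Lemma inG_inv (g : 'M[F]_5) : inG al g -> exists2 g', inG al g' & g' *m g = 1%:M.
Proof.
move=> [a [b [c [d [a_neq0 Ncd ->]]]]].
exists (Mabcd al a^-1 b (c + d) d).
  exists a^-1, b, (c + d), d; split => //; first by rewrite invr_eq0.
  by rewrite -/(qnorm _ _ _) qnorm_conj.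
rewrite Mabcd_mul ?invr_eq0 // -Mabcd1 mulVf //; congr Mabcd.
- by field: two0.
- by rewrite -Ncd; ring.
- by ring: two0.
Qed.

Lemma inG_unitmx (g : 'M[F]_5) : inG al g -> g^T \in unitmx.
Proof.
move=> /inG_inv[g' _ g'g]; rewrite -row_free_unit; apply/row_freeP.
by exists g'^T; rewrite -trmx_mul g'g trmx1.
Qed.

Lemma Qform_inG (g : 'M[F]_5) (x : 'rV[F]_5) :
  inG al g -> Qform (x *m g^T) = Qform x.
Proof.
move=> [a [b [c [d [a_neq0 Ncd ->]]]]].
rewrite -[RHS]mulr1 -Ncd mul_Mabcd_tr /Qform !c5_v5 //=.
by field: two0.
Qed.

Lemma Sigma_inG (g : 'M[F]_5) (x : 'rV[F]_5) :
  inG al g -> (x *m g^T <= Sigma F)%MS = (x <= Sigma F)%MS.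
Proof. by move=> [a [b [c [d [_ _ ->]]]]]; rewrite !sub_SigmaE mul_Mabcd_tr c5_v5. Qed.

Lemma ell_inG (g : 'M[F]_5) (x : 'rV[F]_5) :
  inG al g -> (x *m g^T <= ell F)%MS = (x <= ell F)%MS.
Proof.
suff ell_sub (h : 'M[F]_5) (y : 'rV[F]_5) :
    inG al h -> (y <= ell F)%MS -> (y *m h^T <= ell F)%MS.
  move=> Gg; apply/idP/idP; last exact: ell_sub.
  have [g' Gg' g'g] := inG_inv Gg.
  by move=> /(ell_sub _ _ Gg'); rewrite -mulmxA -trmx_mul g'g trmx1 mulmx1.
move=> [a [b [c [d [_ _ ->]]]]].
rewrite !sub_ellE mul_Mabcd_tr !c5_v5 //= => /and3P[/eqP-> /eqP-> /eqP->].
by rewrite !mulr0 !addr0 eqxx.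
Qed.

Lemma inT_act (g : 'M[F]_5) (L : 'M[F]_(2,5)) :
  inG al g -> inT L -> inT (act g L).
Proof.
move=> Gg; apply: (inT_mulmx (inG_unitmx Gg)) => x.
- exact: Qform_inG.
- exact: Sigma_inG.
- exact: ell_inG.
Qed.

Lemma act_mul (g g' : 'M[F]_5) (L : 'M[F]_(2,5)) :
  act (g *m g') L = act g (act g' L).
Proof. by rewrite /act trmx_mul mulmxA. Qed.

End GroupG.

Section Lines.
Variable F : finFieldType.
Hypothesis F2 : 2%N \in [pchar F].

Definition proj34 : 'M[F]_(5,2) := \matrix_(i, j) (i == j.+3 :> nat)%:R.

Lemma mul_proj34 (x : 'rV[F]_5) : x *m proj34 = \row_(j < 2) [:: c5 x 3; c5 x 4]`_j.
Proof.
apply/rowP => j; rewrite {1}(v5_c5 x) !mxE !big_ord_recl big_ord0 !mxE /=.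
by case: j => -[|[|j]] //= _; ring.
Qed.

Lemma line_coords34_onto (L : 'M[F]_(2,5)) : \rank L = 2%N ->
    (forall z, (z <= L)%MS -> c5 z 3 = 0 -> c5 z 4 = 0 -> z = 0) ->
  forall t3 t4, exists2 f, (f <= L)%MS & c5 f 3 = t3 /\ c5 f 4 = t4.
Proof.
move=> rkL L34_inj t3 t4.
have L_free : row_free L by rewrite /row_free rkL.
have LP_unit : L *m proj34 \in unitmx.
  rewrite -row_free_unit; apply/inj_row_free => w.
  rewrite mulmxA mul_proj34 => /rowP wL34; have := wL34 0; have := wL34 1.
  rewrite !mxE /= => wL4 wL3; apply/eqP; rewrite -(mulmx_free_eq0 _ L_free).
  by apply/eqP/L34_inj; first exact: submxMl.
pose f := \row_(j < 2) [:: t3; t4]`_j *m invmx (L *m proj34) *m L.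
exists f; first exact: submxMl.
have /rowP ft : f *m proj34 = \row_(j < 2) [:: t3; t4]`_j by rewrite -!mulmxA mulVmx ?mulmx1.
by have := ft 0; have := ft 1; rewrite mul_proj34 !mxE.
Qed.

Lemma inT_meet_ell (L : 'M[F]_(2,5)) (z : 'rV[F]_5) :
  inT L -> (z <= L)%MS -> (z <= ell F)%MS -> z = 0.
Proof.
move=> [[_ [LS BL]] [P [PL [P_neq0 [PS QP]] Pell P_uniq]]] zL zell.
apply/eqP; apply: contraNT Pell => z_neq0.
(* otherwise P + z is a second point of H \ l on L *)
have [Pz_ell|Pz_nell] := boolP ((P + z)%R <= ell F)%MS.
  by rewrite -(addrK z P); apply: addmx_sub => //; rewrite eqmx_opp.
have Qz : Qform z = 0.
  by move: zell; rewrite sub_ellE /Qform => /and3P[_ /eqP-> /eqP->]; rewrite !mulr0 addr0.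
have PzH : onH (P + z).
  split; first by apply: contraNneq Pz_nell => ->; apply: sub0mx.
  split; first by rewrite addmx_sub // (submx_trans zL LS).
  by rewrite Qform_add QP Qz BL // !addr0.
have /andP[PzP _] := P_uniq _ (addmx_sub PL zL) PzH Pz_nell.
have zP : (z <= P)%MS by rewrite -(addKr P z); apply: addmx_sub => //; rewrite eqmx_opp.
have /eqmxP <- : (z == P)%MS by rewrite -(mxrank_leqif_eq zP).2 !rank_rV z_neq0 P_neq0.
exact: zell.
Qed.

Lemma inT_normal_form (L : 'M[F]_(2,5)) : inT L -> exists p r s,
  [/\ (v5 0 p s 1 0 <= L)%MS, (v5 0 r p 0 1 <= L)%MS & (r != 0) || (s != 0)].
Proof.
move=> TL; have [[rkL [LS BL]] [P [_ _ _ P_uniq]]] := TL.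
have Lc0 (f : 'rV[F]_5) : (f <= L)%MS -> c5 f 0 = 0.
  by move=> fL; apply/eqP; rewrite -sub_SigmaE (submx_trans fL LS).
have L34_inj (z : 'rV[F]_5) : (z <= L)%MS -> c5 z 3 = 0 -> c5 z 4 = 0 -> z = 0.
  by move=> zL z3 z4; apply: (inT_meet_ell TL zL); rewrite sub_ellE Lc0 // z3 z4 eqxx.
have [f1 f1L [f13 f14]] := line_coords34_onto rkL L34_inj 1 0.
have [f2 f2L [f23 f24]] := line_coords34_onto rkL L34_inj 0 1.
have f22 : c5 f2 2 = c5 f1 1.
  move: (BL _ _ f1L f2L); rewrite /Bform f13 f14 f23 f24 mul0r !mulr0 mulr1 mul1r !addr0.
  by move/eqP; rewrite addr_eq0 (oppr_pchar2 F2) => /eqP.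
exists (c5 f1 1), (c5 f2 1), (c5 f1 2); split.
- by move: (f1L); rewrite {1}(v5_c5 f1) (Lc0 _ f1L) f13 f14.
- by move: (f2L); rewrite {1}(v5_c5 f2) (Lc0 _ f2L) f22 f23 f24.
apply: contraT; rewrite negb_or !negbK => /andP[/eqP r0 /eqP s0].
have onH_f (f : 'rV[F]_5) : (f <= L)%MS -> f != 0 -> Qform f = 0 -> onH f.
  by move=> fL f_neq0 Qf; split; rewrite // sub_SigmaE Lc0.
have f1H : onH f1.
  apply: onH_f => //; first by apply: contra_eq_neq f13 => ->; rewrite c50 eq_sym oner_neq0.
  by rewrite /Qform f13 f14 s0; ring.
have f2H : onH f2.
  apply: onH_f => //; first by apply: contra_eq_neq f24 => ->; rewrite c50 eq_sym oner_neq0.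
  by rewrite /Qform f23 f24 r0; ring.
have f1_nell : ~~ (f1 <= ell F)%MS by rewrite sub_ellE f13 oner_eq0 andbF.
have f2_nell : ~~ (f2 <= ell F)%MS by rewrite sub_ellE f24 oner_eq0 !andbF.
have /andP[f1P _] := P_uniq _ f1L f1H f1_nell.
have /andP[_ Pf2] := P_uniq _ f2L f2H f2_nell.
have /sub_rVP[k f1k] := submx_trans f1P Pf2.
by move: f13; rewrite f1k c5Z f23 mulr0 => /eqP; rewrite eq_sym oner_eq0.
Qed.
End Lines.

Section Orbit.
Variables (F : finFieldType) (al : F).
Hypothesis F2 : 2%N \in [pchar F].
Hypothesis al_irr : irreducible_poly ('X^2 + 'X + al%:P).
Let char2_eq (z x y : F) : x = y + 2%:R * z -> x = y.
Proof. by rewrite (pcharf0 F2) mul0r addr0. Qed.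

Definition L0 : 'M[F]_(1 + 1, 5) := col_mx (v5 0 0 0 1 0) (v5 0 1 0 0 1).

Lemma rank_L0 : \rank L0 = 2%N.
Proof.
apply/eqP/row_freeP; exists (proj34 F).
rewrite /L0 mul_col_mx !mul_proj34 !c5_v5 //=.
apply/matrixP => i j; rewrite !mxE -val_eqE.
by case: splitP => k; rewrite ord1 !mxE => /= ->; case: j => -[|[|j]].
Qed.

Lemma inT_orbit_L0 (L : 'M[F]_(2,5)) : inT L -> exists2 g, inG al g & (act g L0 == L)%MS.
Proof.
move=> TL; have [p [r [s [f1L f2L rs_neq0]]]] := inT_normal_form F2 TL.
have [rho rho2] := pchar2_sqrt F2 r; have [sg sg2] := pchar2_sqrt F2 s.
have N_neq0 : qnorm al rho sg != 0.
  by move: rs_neq0; rewrite -rho2 -sg2 !expf_eq0 /= qnorm_eq0 // negb_and.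
have [a a2] := pchar2_sqrt F2 (qnorm al rho sg).
have a_neq0 : a != 0 by apply: contraNneq N_neq0 => a0; rewrite -a2 a0 expr0n.
pose g := Mabcd al a ((p + rho * sg) / a) (rho / a) (sg / a).
have Gg : inG al g.
  exists a, ((p + rho * sg) / a), (rho / a), (sg / a); split => //.
  by rewrite -[RHS](divff (expf_neq0 2 a_neq0)) {1}a2 /qnorm; field.
exists g => //.
have combL k1 k2 u : u = k1 *: v5 0 p s 1 0 + k2 *: v5 0 r p 0 1 -> (u <= L)%MS.
  by move=> ->; apply: addmx_sub; apply: scalemx_sub.
have gL0L : (act g L0 <= L)%MS.
  (* explicit instances: [act] sees L0 as a 2 x 5 matrix, [col_mx] as a (1 + 1) x 5 one *)
  rewrite /act /L0 (mul_col_mx (v5 0 0 0 1 0) (v5 0 1 0 0 1) g^T).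
  rewrite (col_mx_sub (v5 0 0 0 1 0 *m g^T) (v5 0 1 0 0 1 *m g^T) L).
  apply/andP; split.
  - apply: (combL (rho / a ^+ 2) (sg / a ^+ 2)).
    apply: c5_inj => -[|[|[|[|[|k]]]]] // _;
      by rewrite /g mul_Mabcd_tr c5D !c5Z !c5_v5 //= -?rho2 -?sg2; field.
  - apply: (combL (al * sg / a ^+ 2) ((rho + sg) / a ^+ 2)).
    apply: c5_inj => -[|[|[|[|[|k]]]]] // _;
      rewrite /g mul_Mabcd_tr c5D !c5Z !c5_v5 //= -?rho2 -?sg2;
      [by field | | | by field | by field]; move: a2; rewrite /qnorm => a2.
      by apply: (@char2_eq (al * rho * sg ^+ 2 / a ^+ 2)); field: a2.
    by apply: (@char2_eq (rho * sg * (rho + sg) / a ^+ 2)); field: a2.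
have [_ <-] := mxrank_leqif_eq gL0L.
by case: TL => -[-> _] _; rewrite mxrankMfree ?rank_L0 ?row_free_unit ?(inG_unitmx F2 Gg).
Qed.
End Orbit.

Unset Implicit Arguments.
Set Strict Implicit.

Theorem lemma3p3 (F : finFieldType) (h : nat) (hq : #|F| = (2 ^ h)%N)
  (al : F) (hal : irreducible_poly ('X^2 + 'X + al%:P)) :
  (forall (g : 'M[F]_5) (L : 'M[F]_(2,5)), inG al g -> inT L -> inT (act g L)) /\
  (forall L1 L2 : 'M[F]_(2,5), inT L1 -> inT L2 ->
     exists g : 'M[F]_5, inG al g /\ (act g L1 == L2)%MS).
Proof.
have F2 : 2%N \in [pchar F] by apply: (card_finPcharP hq).
split=> [g L Gg TL | L1 L2 T1 T2]; first exact: (inT_act F2 Gg TL).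
have [g1 G1 E1] := inT_orbit_L0 F2 hal T1.
have [g2 G2 E2] := inT_orbit_L0 F2 hal T2.
have [g1' G1' g1'g1] := inG_inv F2 G1.
exists (g2 *m g1'); split; first exact: inG_mul.
have L0E : act g1' (act g1 (L0 F)) = L0 F by rewrite -act_mul g1'g1 /act trmx1 mulmx1.
rewrite act_mul; apply/eqmxP/(eqmx_trans _ (eqmxP E2))/eqmxMr.
by rewrite -L0E; apply/eqmxMr/eqmx_sym/eqmxP.
Qed.
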